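(* Let $\mathbb{F}$ be any field. There exists an infinite sequence $C_1,C_2,C_3,\dots$ of $\mathbb{F}$-linear codes such that, if $C_i$ has parameters $[n_i,k_i,d_i]$, then for every $i\ge 1$ \[ \frac{k_i d_i}{n_i}=2i>\sqrt{k_i}-1>2i-1 . \]
   Context: An $\mathbb{F}$-linear code of length $n$ is an $\mathbb{F}$-subspace $C\le\mathbb{F}^n$. Its parameters $[n,k,d]$ are the length $n$, the dimension $k=\dim_{\mathbb{F}}C$, and the minimum distance $d$. The minimum distance is the minimum Hamming weight of a nonzero codeword, where the weight $\mathrm{wt}(x)$ of $x\in\mathbb{F}^n$ is its number of nonzero coordinates. *)

From HB Require Import structures.
From mathcomp Require Import all_boot all_order all_algebra all_field.
Set Implicit Arguments. Unset Strict Implicit. Unset Printing Implicit Defensive.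
Import Order.TTheory GRing.Theory Num.Theory.
Local Open Scope ring_scope.

(* An F-linear code of length n is a subspace C of F^n, modelled as
   C : {vspace 'rV[F]_n}; its dimension is \dim C. *)

Definition wt (F : fieldType) (n : nat) (x : 'rV[F]_n) : nat :=
  #|[set j : 'I_n | x 0 j != 0]|.

Definition is_min_dist (F : fieldType) (n : nat) (C : {vspace 'rV[F]_n})
    (d : nat) : Prop :=
  (exists2 x : 'rV[F]_n, x \in C & (x != 0) && (wt x == d)) /\
  (forall x : 'rV[F]_n, x \in C -> x != 0 -> (d <= wt x)%N).

From HB Require Import structures.
From mathcomp Require Import all_boot all_order all_algebra all_field ring zify.
Set Implicit Arguments. Unset Strict Implicit. Unset Printing Implicit Defensive.
Import Order.TTheory GRing.Theory Num.Theory.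
Local Open Scope ring_scope.

(* The code for [i] is the binary evaluation code u |-> (u . s)_(s in {0,1}^m)
   of dimension m = 2i(2i+2), written twice and padded with zeros up to length
   n = (2i+2) 2^m.  Flipping a bit s_l with u_l != 0 changes u . s by +-u_l, so
   at least half of the points s in {0,1}^m see a nonzero value, with equality
   for unit vectors: d = 2^m and k d / n = 2i.  The square-root bounds follow
   from (2i)^2 < m < (2i+1)^2. *)

Lemma wt0 (F : fieldType) (n : nat) : wt (0 : 'rV[F]_n) = 0%N.
Proof. by apply/eqP; rewrite cards_eq0; apply/eqP/setP => j; rewrite !inE mxE eqxx. Qed.

Lemma wt_row_mx (F : fieldType) (n1 n2 : nat) (x : 'rV[F]_n1) (y : 'rV[F]_n2) :
  wt (row_mx x y) = (wt x + wt y)%N.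
Proof.
rewrite /wt -!sum1dep_card big_split_ord /=.
by congr (_ + _)%N; apply: eq_bigl => j; rewrite ?row_mxEl ?row_mxEr.
Qed.

Section CodeOfMatrix.
Variables (F : fieldType) (m n : nat) (G : 'M[F]_(m, n)).

Definition code_of_mx : {vspace 'rV[F]_n} := (linfun (@mulmxr F 1 m n G) @: fullv)%VS.

Lemma mem_code_of_mx u : u *m G \in code_of_mx.
Proof. by have := memv_img (linfun (@mulmxr F 1 m n G)) (memvf u); rewrite lfunE. Qed.

Lemma code_of_mxP x : reflect (exists u, x = u *m G) (x \in code_of_mx).
Proof.
apply: (iffP memv_imgP) => [[u _ ->]|[u ->]]; first by exists u; rewrite lfunE.
by exists u; rewrite ?memvf ?lfunE.
Qed.

Lemma dim_code_of_mx : injective (fun u : 'rV[F]_m => u *m G) -> \dim code_of_mx = m.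
Proof.
move=> G_inj; have ker0 : lker (linfun (@mulmxr F 1 m n G)) == 0%VS.
  by apply/lker0P => u v; rewrite !lfunE /=; apply: G_inj.
by rewrite /code_of_mx limg_dim_eq ?(eqP ker0) ?capv0 // dimvf dim_matrix; lia.
Qed.

Lemma is_min_dist_code_of_mx (d : nat) (u0 : 'rV[F]_m) :
  (0 < d)%N -> wt (u0 *m G) = d ->
  (forall u : 'rV[F]_m, u != 0 -> (d <= wt (u *m G))%N) ->
  is_min_dist code_of_mx d.
Proof.
move=> d_gt0 wt_u0 wt_ge; split.
  exists (u0 *m G); first exact: mem_code_of_mx.
  by rewrite wt_u0 eqxx andbT; apply: contraTneq d_gt0 => uG0; rewrite -wt_u0 uG0 wt0.
move=> _ /code_of_mxP[u ->] uG_neq0; apply: wt_ge.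
by apply: contraNneq uG_neq0 => ->; rewrite mul0mx.
Qed.

Definition double_pad_mx (p : nat) : 'M[F]_(m, n + n + p) := row_mx (row_mx G G) 0.

Lemma wt_mul_double_pad_mx p u : wt (u *m double_pad_mx p) = (2 * wt (u *m G))%N.
Proof. by rewrite !mul_mx_row mulmx0 !wt_row_mx wt0 addn0 addnn mul2n. Qed.

Lemma double_pad_mx_inj p :
  injective (fun u : 'rV[F]_m => u *m G) ->
  injective (fun u : 'rV[F]_m => u *m double_pad_mx p).
Proof.
move=> G_inj u v; rewrite !mul_mx_row => /eq_row_mx[/eq_row_mx[uG_vG _] _].
exact: G_inj.
Qed.

End CodeOfMatrix.

Section BinaryEvaluation.
Variables (F : fieldType) (m : nat).
Local Notation bits := {ffun 'I_m -> bool}.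

Definition bitdot (u : 'rV[F]_m) (s : bits) : F := \sum_l u 0 l * (s l)%:R.

Definition bitdot_support (u : 'rV[F]_m) : {set bits} := [set s | bitdot u s != 0].

Lemma cards_bits : #|[set: bits]| = (2 ^ m)%N.
Proof. by rewrite cardsT card_ffun card_bool card_ord. Qed.

Definition flip_bit (l0 : 'I_m) (s : bits) : bits :=
  [ffun l => if l == l0 then ~~ s l else s l].

Lemma flip_bitK (l0 : 'I_m) : involutive (flip_bit l0).
Proof.
by move=> s; apply/ffunP => l; rewrite !ffunE; case: eqP => //; rewrite negbK.
Qed.

Lemma bitdot_flip_bit (u : 'rV[F]_m) (l0 : 'I_m) (s : bits) :
  bitdot u (flip_bit l0 s) - bitdot u s = (if s l0 then - u 0 l0 else u 0 l0).
Proof.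
rewrite /bitdot (bigD1 l0) //= [X in _ - X](bigD1 l0) //= ffunE eqxx.
under eq_bigr => l /negbTE l_neq do rewrite ffunE l_neq.
by case: (s l0) => /=; ring.
Qed.

Lemma bitdot_support_lb (u : 'rV[F]_m) :
  u != 0 -> (2 ^ m <= 2 * #|bitdot_support u|)%N.
Proof.
move=> u_neq0; have [l0 u_l0] : exists l0, u 0 l0 != 0.
  apply/existsP; apply: contraNT u_neq0 => /existsPn u_eq0.
  by apply/eqP/rowP => l; rewrite mxE; apply/eqP/negPn/u_eq0.
set S := bitdot_support u.
have cover : [set: bits] \subset S :|: flip_bit l0 @: S.
  apply/subsetP => s _; rewrite in_setU inE; case: eqP => //= us0.
  apply/imsetP; exists (flip_bit l0 s); last by rewrite flip_bitK.
  rewrite inE; have := bitdot_flip_bit u l0 s; rewrite us0 subr0 => ->.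
  by case: (s l0); rewrite ?oppr_eq0.
rewrite -cards_bits; apply: leq_trans (subset_leq_card cover) _.
apply: leq_trans (leq_card_setU _ _) _.
by rewrite card_imset ?mul2n ?addnn //; apply: inv_inj (flip_bitK l0).
Qed.

Lemma bitdot_delta (l0 : 'I_m) (s : bits) : bitdot (delta_mx ord0 l0) s = (s l0)%:R.
Proof.
rewrite /bitdot (bigD1 l0) //= big1 ?addr0 => [|l l_neq]; rewrite mxE eqxx /=.
  by rewrite mul1r.
by rewrite (negbTE l_neq) mul0r.
Qed.

Lemma bitdot_support_delta (l0 : 'I_m) :
  (2 * #|bitdot_support (delta_mx ord0 l0)| = 2 ^ m)%N.
Proof.
have delta_neq0 : delta_mx ord0 l0 != 0 :> 'rV[F]_m.
  by apply/eqP => /rowP/(_ l0); rewrite !mxE !eqxx; apply/eqP/oner_neq0.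
set S := bitdot_support _.
have inS s : (s \in S) = s l0.
  by rewrite inE bitdot_delta; case: (s l0); rewrite ?oner_eq0 ?eqxx.
apply/eqP; rewrite eqn_leq bitdot_support_lb // andbT.
have disj : [disjoint S & flip_bit l0 @: S].
  apply/pred0P => s /=; apply/andP => -[s_in /imsetP[t t_in s_eq]].
  by move: s_in; rewrite s_eq inS ffunE eqxx -inS t_in.
have /eqP card_union : #|S :|: flip_bit l0 @: S| == (#|S| + #|flip_bit l0 @: S|)%N.
  by rewrite (leq_card_setU S (flip_bit l0 @: S)).2.
rewrite card_imset in card_union; last exact: inv_inj (flip_bitK l0).
by rewrite mul2n -addnn -card_union -cards_bits subset_leq_card ?subsetT.
Qed.

Definition bit_eval_mx : 'M[F]_(m, #|bits|) :=
  \matrix_(l, j) ((enum_val j : bits) l)%:R.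

Lemma bit_eval_mxE (u : 'rV[F]_m) j : (u *m bit_eval_mx) 0 j = bitdot u (enum_val j).
Proof. by rewrite mxE; apply: eq_bigr => l _; rewrite mxE. Qed.

Lemma wt_bit_eval_mx (u : 'rV[F]_m) : wt (u *m bit_eval_mx) = #|bitdot_support u|.
Proof.
rewrite /wt -(card_imset (bitdot_support u) enum_rank_inj); apply: eq_card => j.
rewrite inE bit_eval_mxE; apply/idP/imsetP => [uj_neq0 | [s s_in ->]].
  by exists (enum_val j); rewrite ?inE ?enum_valK.
by move: s_in; rewrite inE enum_rankK.
Qed.

Lemma bit_eval_mx_inj : injective (fun u : 'rV[F]_m => u *m bit_eval_mx).
Proof.
have coord (u : 'rV[F]_m) (l : 'I_m) :
    (u *m bit_eval_mx) 0 (enum_rank [ffun l' => l' == l]) = u 0 l.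
  rewrite bit_eval_mxE enum_rankK /bitdot (bigD1 l) //= ffunE eqxx mulr1.
  by rewrite big1 ?addr0 // => l' /negbTE l'_neq; rewrite ffunE l'_neq mulr0.
by move=> u v uv; apply/rowP => l; rewrite -!coord uv.
Qed.

End BinaryEvaluation.

Lemma sqrtC_nat_between (a k : nat) :
  (a ^ 2 < k < a.+1 ^ 2)%N -> (a%:R < sqrtC (k%:R : algC) < a.+1%:R).
Proof.
have sqrt_sq (j : nat) : (j%:R : algC) = sqrtC (j ^ 2)%N%:R by rewrite natrX sqrCK ?ler0n.
case/andP => lo hi; rewrite [a%:R]sqrt_sq [a.+1%:R]sqrt_sq.
by rewrite !ltr_sqrtC ?qualifE /= ?ler0n ?ltr_nat ?lo.
Qed.

Definition msg_len (i : nat) : nat := (2 * i * (2 * i + 2))%N.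

Definition code_len (i : nat) : nat :=
  let N := #|{ffun 'I_(msg_len i) -> bool}| in (N + N + 2 * i * N)%N.

Definition doubled_eval_code (F : fieldType) (i : nat) : {vspace 'rV[F]_(code_len i)} :=
  let N := #|{ffun 'I_(msg_len i) -> bool}| in
  code_of_mx (double_pad_mx (bit_eval_mx F (msg_len i)) (2 * i * N)).

Theorem theorem1p1 (F : fieldType) :
  exists (n : nat -> nat) (C : forall i : nat, {vspace 'rV[F]_(n i)}),
    forall i : nat, (1 <= i)%N ->
      exists d : nat,
        is_min_dist (C i) d /\
        let k := \dim (C i) in
        ((k%:R * d%:R / (n i)%:R : algC) = (2 * i)%:R) /\
        ((2 * i)%:R > sqrtC (k%:R : algC) - 1) /\
        (sqrtC (k%:R : algC) - 1 > (2 * i)%:R - 1).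
Proof.
exists code_len, (doubled_eval_code F) => i i_ge1; exists (2 ^ msg_len i)%N.
set m := msg_len i; have m_gt0 : (0 < m)%N by rewrite /m /msg_len; lia.
have len : code_len i = ((2 * i + 2) * 2 ^ m)%N.
  by rewrite /code_len card_ffun card_bool card_ord -/m; lia.
have -> : \dim (doubled_eval_code F i) = m.
  exact/dim_code_of_mx/double_pad_mx_inj/bit_eval_mx_inj.
split; [apply: (is_min_dist_code_of_mx (u0 := delta_mx ord0 (Ordinal m_gt0))) | split].
- by rewrite expn_gt0.
- by rewrite wt_mul_double_pad_mx wt_bit_eval_mx bitdot_support_delta.
- by move=> u u_neq0; rewrite wt_mul_double_pad_mx wt_bit_eval_mx bitdot_support_lb.
- have rate : (m * 2 ^ m = 2 * i * code_len i)%N by rewrite len /m /msg_len !mulnA.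
  have len_gt0 : (0 < code_len i)%N by rewrite len muln_gt0 addn_gt0 expn_gt0 !orbT.
  by rewrite -natrM rate natrM mulfK // pnatr_eq0 -lt0n len_gt0.
- have m_between : ((2 * i) ^ 2 < m < (2 * i).+1 ^ 2)%N by rewrite /m /msg_len; nia.
  have /andP[sqrt_gt sqrt_lt] := sqrtC_nat_between m_between.
  by split; [rewrite ltrBlDr natr1 | rewrite ltrD2r].
Qed.
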